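(* Suppose $pn\ge\log n$. Then for all sufficiently large $n$ and every integer $t$ with $n^{24/25}\le t\le\frac n5$, with probability at least $1-n^{-t/120}$, every set $T$ of $t$ vertices of $G(n,p)$ has at least twice as many edges between $T$ and $[n]\setminus T$ as edges with both endpoints in $T$.
   Context: $G(n,p)$ is the Erdős–Rényi random graph on $[n]$, each edge present independently with probability $p$. *)

From Stdlib Require Import Reals.
From mathcomp Require Import all_boot.
Set Implicit Arguments. Unset Strict Implicit. Unset Printing Implicit Defensive.

(* Vertex set [n] is 'I_n.  A simple graph on [n] is a set of pairs (i,j)
   with i < j (each unordered edge represented once). *)
Definition pairs (n : nat) : {set 'I_n * 'I_n} := [set e : 'I_n * 'I_n | (nat_of_ord e.1 < nat_of_ord e.2)%N].

Definition in_edges (n : nat) (G : {set 'I_n * 'I_n}) (T : {set 'I_n}) : nat :=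
  #|[set e in G | (e.1 \in T) && (e.2 \in T)]|.

Definition cross_edges (n : nat) (G : {set 'I_n * 'I_n}) (T : {set 'I_n}) : nat :=
  #|[set e in G | (e.1 \in T) != (e.2 \in T)]|.

Definition good (n t : nat) (G : {set 'I_n * 'I_n}) : bool :=
  [forall T : {set 'I_n}, (#|T| == t) ==> (2 * in_edges G T <= cross_edges G T)%N].

Definition gnp_weight (n : nat) (p : R) (G : {set 'I_n * 'I_n}) : R :=
  Rmult (pow p #|G|) (pow (Rminus 1 p) (#|pairs n| - #|G|)).

Definition gnp_prob (n : nat) (p : R) (P : pred {set 'I_n * 'I_n}) : R :=
  \big[Rplus/R0]_(G : {set 'I_n * 'I_n} | (G \subset pairs n) && P G) gnp_weight p G.

(* Fix a t-set T and give each potential edge the weight 9/4 if it lies inside T, 2/3 if it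
   crosses from T to its complement, and 1 otherwise.  When 2 e(T) > e(T, [n]\T) the product of
   the weights of the edges of G is (3/2)^(2 e(T) - e(T, [n]\T)) >= 1, so by Markov's inequality
   T fails with probability at most the expected product, which by independence of the edges is
   prod_e (1 + p (w_e - 1)) <= exp (p sum_e (w_e - 1)) <= exp (-17 p t n / 120) as soon as
   5 t <= n.  A union bound over the C(n, t) <= (e n / t)^t sets T, together with p n >= ln n and
   ln t >= 24/25 ln n, leaves a failure probability below n^(-t/120) once ln n >= 11. *)
From Stdlib Require Import Reals.
From mathcomp Require Import all_boot all_order all_algebra.
From mathcomp Require Import Rstruct ring lra.
Import Order.TTheory GRing.Theory Num.Theory.
Set Implicit Arguments. Unset Strict Implicit. Unset Printing Implicit Defensive.
Local Open Scope ring_scope.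

(* Inside this section numerals at type R are read in ring_scope; the statement of the final
   theorem, stated after it, keeps the Stdlib reading. *)
Section GnpCrossingEdges.
Local Bind Scope ring_scope with R.

Lemma ler_exp (x y : R) : x <= y -> exp x <= exp y.
Proof.
by move=> le_xy; rewrite leNgt; apply/negP => /RltP/exp_lt_inv/RltP; rewrite ltNge le_xy.
Qed.

Lemma ler_ln (x y : R) : 0 < x -> x <= y -> ln x <= ln y.
Proof.
move=> x_gt0 le_xy; have /RltP y_gt0 := lt_le_trans x_gt0 le_xy.
have /RltP {}x_gt0 := x_gt0.
rewrite leNgt; apply/negP => /RltP/(ln_lt_inv _ _ y_gt0 x_gt0)/RltP.
by rewrite ltNge le_xy.
Qed.

Lemma exp_ge0 (x : R) : 0 <= exp x.
Proof. exact/RleP/Rlt_le/exp_pos. Qed.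

Lemma sum_subset_prod (I : finType) (S : {set I}) (F G : I -> R) :
  \sum_(J : {set I} | J \subset S) \prod_(i in S) (if i \in J then F i else G i)
  = \prod_(i in S) (F i + G i).
Proof.
rewrite [RHS](big_mkcond (mem S)) /=.
have -> : \prod_i (if i \in S then F i + G i else 1)
   = \prod_i ((if i \in S then F i else 0) + (if i \in S then G i else 1)).
  by apply: eq_bigr => i _; case: (i \in S); rewrite ?addr0 ?add0r.
rewrite bigA_distr [RHS](bigID (fun J : {set I} => J \subset S)) /=.
rewrite [X in _ = _ + X]big1 ?addr0 => [|J /subsetPn [i iJ iS]]; last first.
  by rewrite (bigD1 i) //= iJ (negbTE iS) mul0r.
apply: eq_bigr => J JS; rewrite big_mkcond /=; apply: eq_bigr => i _.
case: ifP => iS //; case: ifP => // iJ.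
by move: (subsetP JS i iJ); rewrite iS.
Qed.

Lemma prod_1D_le_exp (I : finType) (A : {pred I}) (x : I -> R) :
  (forall i, i \in A -> -1 <= x i) -> \prod_(i in A) (1 + x i) <= exp (\sum_(i in A) x i).
Proof.
move=> x_ge_N1; rewrite (big_morph exp (fun a b => esym (expRD a b)) expR0).
apply: ler_prod => i iA; rewrite -lerBlDl sub0r x_ge_N1 //=.
by have /RleP := exp_ineq1_le (x i).
Qed.

Lemma sumr_if_mem (I : finType) (T : {set I}) (a b : R) :
  \sum_i (if i \in T then a else b) = a * #|T|%:R + b * #|~: T|%:R.
Proof.
rewrite (bigID (mem T)) /= (eq_bigr (fun=> a)) => [|i ->//].
rewrite [X in _ + X](eq_bigr (fun=> b)) => [|i /negbTE ->//].
rewrite [X in _ + X](eq_bigl (mem (~: T))) => [|i]; last by rewrite !inE.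
by rewrite !sumr_const !mulr_natr.
Qed.

Lemma sum_pairs_sym_le (n : nat) (g : 'I_n * 'I_n -> R) :
  (forall i j, g (i, j) = g (j, i)) -> (forall i, 0 <= g (i, i)) ->
  2 * \sum_(e in pairs n) g e <= \sum_e g e.
Proof.
move=> g_sym g_diag.
have sum_swap : \sum_(e in pairs n) g e = \sum_(e : 'I_n * 'I_n | (e.2 < e.1)%N) g e.
  rewrite (reindex_inj (h := fun e : 'I_n * 'I_n => (e.2, e.1))
                       (P := fun e : 'I_n * 'I_n => (e.2 < e.1)%N)) /=.
    by apply: eq_big => [e|[i j] _]; [rewrite inE | exact: g_sym].
  by move=> [i j] [k l] [-> ->].
have sum_diag : 0 <= \sum_(e : 'I_n * 'I_n | ~~ (e.1 < e.2)%N && ~~ (e.2 < e.1)%N) g e.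
  apply: sumr_ge0 => -[i j] /=; rewrite -!leqNgt => /andP[le_ji le_ij].
  by have -> : i = j by apply/val_inj/eqP; rewrite eqn_leq le_ij le_ji.
rewrite [X in _ <= X](bigID (fun e : 'I_n * 'I_n => (e.1 < e.2)%N)) /=.
rewrite [X in _ <= _ + X](bigID (fun e : 'I_n * 'I_n => (e.2 < e.1)%N)) /=.
rewrite [X in _ <= X + _](eq_bigl (fun e => e \in pairs n)) => [|e]; last by rewrite inE.
rewrite [X in _ <= _ + (X + _)](eq_bigl (fun e : 'I_n * 'I_n => (e.2 < e.1)%N)) => [|e].
  by rewrite -sum_swap; lra.
by case: ltngtP.
Qed.

Lemma pow_ge1_of_le_double (i c : nat) :
  (c <= 2 * i)%N -> 1 <= (9/4 : R) ^+ i * (2/3) ^+ c.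
Proof.
move=> le_c_2i.
have -> : (9/4 : R) ^+ i = (3/2) ^+ (2 * i) by rewrite exprM; congr (_ ^+ _); rewrite expr2; lra.
have [d ->] : exists d, (2 * i = c + d)%N by exists (2 * i - c)%N; rewrite subnKC.
rewrite exprD mulrAC -exprMn.
have -> : (3/2 * (2/3) : R) = 1 by lra.
by rewrite expr1n mul1r; apply: exprn_ege1; lra.
Qed.

Section RandomGraph.
Variables (n : nat) (p : R).
Hypothesis p01 : 0 <= p <= 1.

Local Notation edge := ('I_n * 'I_n)%type.
Local Notation graph := {set edge}.

Lemma gnp_weight_ge0 (G : graph) : 0 <= gnp_weight p G.
Proof.
have /andP[p_ge0 p_le1] := p01.
by rewrite /gnp_weight !RpowE mulr_ge0 // exprn_ge0 // subr_ge0.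
Qed.

Lemma gnp_weightE (G : graph) : G \subset pairs n ->
  gnp_weight p G = \prod_(e in pairs n) (if e \in G then p else 1 - p).
Proof.
move=> G_pairs; rewrite /gnp_weight !RpowE (bigID (mem G)) /=.
rewrite (eq_bigr (fun=> p)) => [|e /andP[_ ->]//].
rewrite [X in _ * X](eq_bigr (fun=> 1 - p)) => [|e /andP[_ /negbTE ->]//].
rewrite (eq_bigl (mem (pairs n :&: G))) => [|e]; last by rewrite !inE.
rewrite [X in _ * X](eq_bigl (mem (pairs n :\: G))) => [|e]; last by rewrite !inE andbC.
by rewrite !prodr_const cardsD (setIidPr G_pairs).
Qed.

Lemma gnp_expect_prod (f : edge -> R) :
  \sum_(G : graph | G \subset pairs n) gnp_weight p G * \prod_(e in G) f e
  = \prod_(e in pairs n) (1 + p * (f e - 1)).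
Proof.
have weight_prod (G : graph) : G \subset pairs n -> gnp_weight p G * \prod_(e in G) f e
    = \prod_(e in pairs n) (if e \in G then p * f e else 1 - p).
  move=> G_pairs.
  have -> : \prod_(e in G) f e = \prod_(e in pairs n) (if e \in G then f e else 1).
    rewrite -big_mkcondr; apply: eq_bigl => e.
    by apply/idP/andP => [eG | [] //]; rewrite (subsetP G_pairs).
  rewrite gnp_weightE // -big_split; apply: eq_bigr => e _.
  by case: (e \in G); rewrite /= ?mulr1.
by rewrite (eq_bigr _ weight_prod) sum_subset_prod; apply: eq_bigr => e _; lra.
Qed.

Lemma gnp_total :
  \sum_(G : graph | G \subset pairs n) gnp_weight p G = 1.
Proof.
transitivity (\prod_(e in pairs n) (1 + p * ((fun=> 1) e - 1))).
  by rewrite -gnp_expect_prod; apply: eq_bigr => G _; rewrite big1 ?mulr1.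
by rewrite big1 // => e _; rewrite subrr mulr0 addr0.
Qed.

Lemma gnp_probC (P : pred graph) : gnp_prob p P = 1 - gnp_prob p (predC P).
Proof. by rewrite -gnp_total (bigID P) /= addrK. Qed.

Lemma gnp_prob_union (I : finType) (A : {pred I}) (Q : I -> pred graph)
    (P : pred graph) :
  (forall G : graph, G \subset pairs n -> P G -> exists2 i, i \in A & Q i G) ->
  gnp_prob p P <= \sum_(i in A) gnp_prob p (Q i).
Proof.
move=> P_cover; pose F (G : graph) i := if Q i G then gnp_weight p G else 0.
have F_ge0 G i : 0 <= F G i by rewrite /F; case: ifP => // _; apply: gnp_weight_ge0.
apply: (@le_trans _ _ (\sum_(G : graph | (G \subset pairs n) && P G) \sum_(i in A) F G i)).
  apply: ler_sum => G /andP[G_pairs PG]; have [i iA QiG] := P_cover G G_pairs PG.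
  by rewrite (bigD1 i) //= {1}/F QiG lerDl sumr_ge0.
apply: (@le_trans _ _ (\sum_(G : graph | G \subset pairs n) \sum_(i in A) F G i)).
  rewrite [X in _ <= X](bigID P) /= lerDl.
  by apply: sumr_ge0 => G _; apply: sumr_ge0.
by rewrite exchange_big; apply: ler_sum => i _; rewrite /gnp_prob big_mkcondr.
Qed.

Lemma gnp_prob_markov (f : edge -> R) (P : pred graph) :
  (forall e, 0 <= f e) ->
  (forall G : graph, G \subset pairs n -> P G -> 1 <= \prod_(e in G) f e) ->
  gnp_prob p P <= exp (p * \sum_(e in pairs n) (f e - 1)).
Proof.
move=> f_ge0 P_heavy; have /andP[p_ge0 p_le1] := p01.
apply: (@le_trans _ _ (\prod_(e in pairs n) (1 + p * (f e - 1)))).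
  rewrite -gnp_expect_prod [X in _ <= X](bigID P) /=.
  apply: ler_wpDr.
    by apply: sumr_ge0 => G _; rewrite mulr_ge0 ?gnp_weight_ge0 ?prodr_ge0.
  apply: ler_sum => G /andP[G_pairs PG]; rewrite ler_peMr ?gnp_weight_ge0 ?P_heavy //.
rewrite mulr_sumr; apply: prod_1D_le_exp => e _.
by have := f_ge0 e; nra.
Qed.

End RandomGraph.

Section Tilt.
Variables (n : nat) (T : {set 'I_n}).

Definition tilt (e : 'I_n * 'I_n) : R :=
  if (e.1 \in T) && (e.2 \in T) then 9/4 else if (e.1 \in T) != (e.2 \in T) then 2/3 else 1.

Lemma prod_tilt (G : {set 'I_n * 'I_n}) :
  \prod_(e in G) tilt e = (9/4) ^+ in_edges G T * (2/3) ^+ cross_edges G T.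
Proof.
rewrite (bigID (fun e => (e.1 \in T) && (e.2 \in T))) /=.
rewrite [X in _ * X](bigID (fun e => (e.1 \in T) != (e.2 \in T))) /=.
rewrite [X in _ * (_ * X)]big1 ?mulr1 => [|e /andP[/andP[_ /negbTE in12] /negbTE cross12]];
  last by rewrite /tilt in12 cross12.
rewrite (eq_bigr (fun=> 9/4)) => [|e /andP[_ in12]]; last by rewrite /tilt in12.
rewrite [X in _ * X](eq_bigr (fun=> 2/3)) => [|e /andP[/andP[_ /negbTE in12] cross12]]; last first.
  by rewrite /tilt in12 cross12.
rewrite (eq_bigl (mem [set e in G | (e.1 \in T) && (e.2 \in T)])) => [|e]; last by rewrite !inE.
rewrite [X in _ * X](eq_bigl (mem [set e in G | (e.1 \in T) != (e.2 \in T)])) => [|e]; last first.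
  by rewrite !inE; case: (e \in G); case: (e.1 \in T); case: (e.2 \in T).
by rewrite !prodr_const.
Qed.

Lemma sum_tilt :
  \sum_e (tilt e - 1) = 5/4 * #|T|%:R ^+ 2 - 2/3 * #|T|%:R * #|~: T|%:R.
Proof.
rewrite -(pair_bigA _ (fun i j => tilt (i, j) - 1)) /=.
rewrite (eq_bigr (fun i => if i \in T then 5/4 * #|T|%:R - 1/3 * #|~: T|%:R
                            else - (1/3) * #|T|%:R)) => [|i _].
  by rewrite sumr_if_mem expr2; lra.
rewrite /tilt /=; case: (i \in T) => /=.
  rewrite (eq_bigr (fun j => if j \in T then 5/4 else - (1/3))) => [|j _].
    by rewrite sumr_if_mem; lra.
  by case: (j \in T) => /=; lra.
rewrite (eq_bigr (fun j => if j \in T then - (1/3) else 0)) => [|j _].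
  by rewrite sumr_if_mem; lra.
by case: (j \in T) => /=; lra.
Qed.

Lemma sum_tilt_pairs : 5 * #|T|%:R <= n%:R :> R ->
  \sum_(e in pairs n) (tilt e - 1) <= - (17/120) * #|T|%:R * n%:R.
Proof.
have tilt_sym i j : tilt (i, j) - 1 = tilt (j, i) - 1 by rewrite /tilt /= andbC eq_sym.
have tilt_diag i : 0 <= tilt (i, i) - 1 by rewrite /tilt /=; case: (i \in T) => /=; lra.
(* Half of 5/4 u^2 - 2/3 u (n - u) is at most -17/120 u n when 5 u <= n. *)
have := sum_pairs_sym_le (g := fun e => tilt e - 1) tilt_sym tilt_diag; rewrite sum_tilt.
have <- : #|T|%:R + #|~: T|%:R = n%:R :> R by rewrite -natrD cardsC card_ord.
have : 0 <= #|T|%:R :> R by apply: ler0n.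
by rewrite expr2; set u := #|T|%:R; set v := #|~: T|%:R; nra.
Qed.

End Tilt.

Lemma gnp_prob_set_unbalanced (n : nat) (p : R) (T : {set 'I_n}) :
  0 <= p <= 1 -> 5 * #|T|%:R <= n%:R :> R ->
  gnp_prob p [pred G | ~~ (2 * in_edges G T <= cross_edges G T)%N]
  <= exp (- (17/120) * p * #|T|%:R * n%:R).
Proof.
move=> /[dup] p01 /andP[p_ge0 _] small_T.
have tilt_ge0 e : 0 <= tilt T e by rewrite /tilt; case: ifP => _; last case: ifP => _; lra.
apply: le_trans (gnp_prob_markov p01 tilt_ge0 _) _ => [G _ /= bad_G|].
  by rewrite prod_tilt pow_ge1_of_le_double // ltnW // ltnNge.
by apply: ler_exp; have := sum_tilt_pairs small_T; nra.
Qed.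

Lemma gnp_prob_good_ge (n : nat) (p : R) (t : nat) :
  0 <= p <= 1 -> 5 * t%:R <= n%:R :> R ->
  1 - 'C(n, t)%:R * exp (- (17/120) * p * t%:R * n%:R) <= gnp_prob p (@good n t).
Proof.
move=> p01 small_t; rewrite gnp_probC lerD2l lerN2.
apply: le_trans (gnp_prob_union p01 (A := [pred T : {set 'I_n} | #|T| == t])
  (Q := fun T => [pred G | ~~ (2 * in_edges G T <= cross_edges G T)%N]) _) _.
  by move=> G _ /forallPn[T]; rewrite negb_imply => /andP[T_card bad_T]; exists T.
apply: (@le_trans _ _
  (\sum_(T : {set 'I_n} | #|T| == t) exp (- (17/120) * p * t%:R * n%:R))).
  apply: ler_sum => T /eqP T_card.
  by have := @gnp_prob_set_unbalanced n p T p01; rewrite T_card; apply.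
rewrite (eq_bigl (fun T => T \in [set T : {set 'I_n} | #|T| == t])) => [|T]; last by rewrite inE.
by rewrite sumr_const card_draws card_ord [X in _ <= X]mulr_natl.
Qed.

Lemma ffact_leq_expn (m k : nat) : (m ^_ k <= m ^ k)%N.
Proof.
elim: k m => [|k IHk] [|m] //; rewrite ffactnS expnS leq_mul2l /=.
apply: leq_trans (IHk m) _; case: k IHk => [|k] _ //.
by rewrite leq_exp2r.
Qed.

Lemma exprn_exp_ln (x : R) (k : nat) : 0 < x -> x ^+ k = exp (k%:R * ln x).
Proof. by move=> /RltP x_gt0; rewrite -{1}(exp_ln x x_gt0) expRX mulr_natl. Qed.

Lemma natS_exprn_le (m : nat) : m.+1%:R ^+ m <= exp 1 * m%:R ^+ m.
Proof.
case: m => [|k].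
  by rewrite !expr0 mulr1; have /RleP := exp_ineq1_le 1; rewrite RplusE R1E; lra.
set m := k.+1; have m_gt0 : 0 < m%:R :> R by rewrite ltr0n.
have le_mS : m.+1%:R <= m%:R * exp m%:R^-1.
  have -> : m.+1%:R = m%:R * (1 + m%:R^-1) :> R.
    by rewrite mulrDr mulr1 mulfV ?gt_eqF // -natr1.
  by apply: ler_wpM2l; [exact: ltW | apply/RleP/exp_ineq1_le].
apply: le_trans (lerXn2r _ _ _ le_mS) _; rewrite ?nnegrE ?ler0n ?mulr_ge0 ?exp_ge0 //.
by rewrite exprMn mulrC expRX -[_ *+ m]mulr_natr mulVf ?gt_eqF.
Qed.

Lemma exprn_le_exp_fact (m : nat) : m%:R ^+ m <= exp m%:R * m`!%:R.
Proof.
elim: m => [|m IHm]; first by rewrite expr0 expR0 mul1r.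
have -> : exp m.+1%:R = exp 1 * exp m%:R by rewrite expRD -natr1 addrC.
rewrite exprS factS natrM.
apply: le_trans (ler_wpM2l (ler0n _ _) (natS_exprn_le m)) _.
rewrite (_ : _ * _ * _ = m.+1%:R * (exp 1 * (exp m%:R * m`!%:R))); last by ring.
by apply: ler_wpM2l => //; apply: ler_wpM2l => //; apply: exp_ge0.
Qed.

Lemma bin_le_exp (n t : nat) : (0 < n)%N -> (0 < t)%N ->
  'C(n, t)%:R <= exp (t%:R + t%:R * ln n%:R - t%:R * ln t%:R).
Proof.
move=> n_gt0 t_gt0.
have bin_fact : 'C(n, t)%:R * t`!%:R <= exp (t%:R * ln n%:R).
  rewrite -exprn_exp_ln ?ltr0n // -natrM -natrX ler_nat.
  by rewrite bin_ffact ffact_leq_expn.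
have pow_t := exprn_le_exp_fact t; rewrite exprn_exp_ln ?ltr0n // in pow_t.
have key : 'C(n, t)%:R * exp (t%:R * ln t%:R) <= exp (t%:R + t%:R * ln n%:R).
  rewrite -expRD; apply: le_trans (ler_wpM2l (ler0n _ _) pow_t) _.
  by rewrite mulrCA; apply: ler_wpM2l => //; apply: exp_ge0.
rewrite -expRD.
have -> : 'C(n, t)%:R = 'C(n, t)%:R * exp (t%:R * ln t%:R) * exp (- (t%:R * ln t%:R)) :> R.
  by rewrite -mulrA expRD RplusE subrr expR0 mulr1.
by apply: ler_wpM2r => //; apply: exp_ge0.
Qed.

Lemma ln_ge_of_pow3_le (k n : nat) : (3 ^ k <= n)%N -> k%:R <= ln n%:R.
Proof.
move=> pow3_le_n; rewrite -[k%:R]ln_exp -expRX.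
apply: ler_ln; first by apply/exprn_gt0/RltP/exp_pos.
apply: (@le_trans _ _ (3 ^+ k)); last by rewrite -natrX ler_nat.
by apply: lerXn2r; rewrite ?nnegrE ?exp_ge0 //; apply/RleP/exp_le_3.
Qed.

Lemma bin_exp_le_Rpower (n : nat) (p : R) (t : nat) :
  (3 ^ 11 <= n)%N -> 0 <= p -> ln n%:R <= p * n%:R -> Rpower n%:R (24/25) <= t%:R ->
  'C(n, t)%:R * exp (- (17/120) * p * t%:R * n%:R) <= Rpower n%:R (- t%:R / 120).
Proof.
move=> n_large p_ge0 p_dense t_large.
have n_gt0 : (0 < n)%N by apply: leq_trans n_large; rewrite expn_gt0.
have Rpower_pos : 0 < Rpower n%:R (24/25) by apply/RltP/exp_pos.
have t_pos : 0 < t%:R :> R := lt_le_trans Rpower_pos t_large.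
have t_gt0 : (0 < t)%N by rewrite -(ltr0n R).
have ln_t : 24/25 * ln n%:R <= ln t%:R.
  by have := ler_ln Rpower_pos t_large; rewrite ln_Rpower RmultE.
have ln_n := ln_ge_of_pow3_le n_large.
apply: le_trans (ler_wpM2r (exp_ge0 _) (bin_le_exp n_gt0 t_gt0)) _.
(* The exponent is at most t (1 - 7/75 ln n), and 75/7 < 11. *)
rewrite expRD /Rpower RplusE RmultE; apply: ler_exp.
set L := ln n%:R in p_dense ln_t ln_n *; set T := t%:R in t_pos ln_t *.
have := ler_wpM2r (ltW t_pos) ln_t; have := ler_wpM2r (ltW t_pos) p_dense.
have := ler_wpM2r (ltW t_pos) ln_n; nra.
Qed.

End GnpCrossingEdges.

Theorem mainTheorem17 :
  exists N : nat, forall n : nat, (N <= n)%nat ->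
  forall p : R, Rle 0 p -> Rle p 1 -> Rle (ln (INR n)) (Rmult p (INR n)) ->
  forall t : nat,
    Rle (Rpower (INR n) (Rdiv 24 25)) (INR t) -> Rle (INR t) (Rdiv (INR n) 5) ->
    Rle (Rminus 1 (Rpower (INR n) (Rdiv (Ropp (INR t)) 120))) (@gnp_prob n p (@good n t)).
Proof.
exists (3 ^ 11)%N => n n_large p /RleP p_ge0 /RleP p_le1 /RleP p_dense t
  /RleP t_large /RleP t_small.
apply/RleP; rewrite !RealsE /= in p_dense t_large t_small *.
have p01 : 0 <= p <= 1 by rewrite p_ge0 p_le1.
have small_t : 5 * t%:R <= n%:R :> R by lra.
apply: le_trans (gnp_prob_good_ge p01 small_t); rewrite lerD2l lerN2.
exact: bin_exp_le_Rpower.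
Qed.
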